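(* Let $f_1,\dots,f_T\in\mathcal F_X(\alpha,l,G)$ be arbitrary, and run RHGD and RHAG (defined in the context) with prediction window $W\ge 0$ and stepsizes $\gamma=1/l$, $\eta=1/L$, where $L=l+4\beta$. Then $$\mathrm{Reg}(\mathrm{RHGD},\mathcal L_T)\le Q_f\,\delta\Big(1-\frac{1}{Q_f}\Big)^{W}L_T,\qquad \mathrm{Reg}(\mathrm{RHAG},\mathcal L_T)\le 2\delta\Big(1-\frac{1}{\sqrt{Q_f}}\Big)^{W}L_T,$$ where $\mathcal L_T=\mathcal L_T(L_T,\mathcal F_X(\alpha,l,G))$, $\delta=(\beta/l+1)\frac{G}{1-\kappa}$, $\kappa=\sqrt{1-\alpha/l}$ and $Q_f=\frac{l+4\beta}{\alpha}$.
   Context: Setting: $X\subseteq\mathbb R^n$ is nonempty, compact and convex with diameter $D$, i.e. $\|x-y\|\le D$ for all $x,y\in X$. The parameter $\beta\ge 0$, the initial point $x_0\in X$, and the horizon $T\ge 1$ are fixed, and $\Pi_X$ denotes Euclidean projection onto $X$. Function class: for $0<\alpha\le l$ and $G>0$, $\mathcal F_X(\alpha,l,G)$ is the set of differentiable $f:\mathbb R^n\to\mathbb R$ such that for all $x,y\in\mathbb R^n$ $$f(x)+\langle\nabla f(x),y-x\rangle+\tfrac{\alpha}{2}\|y-x\|^2\le f(y)\le f(x)+\langle\nabla f(x),y-x\rangle+\tfrac{l}{2}\|y-x\|^2,$$ and $\|\nabla f(x)\|\le G$ for all $x\in X$. Total cost: $C_1^T(x)=\sum_{t=1}^T\big(f_t(x_t)+\frac\beta2\|x_t-x_{t-1}\|^2\big)$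 for $x=(x_1,\dots,x_T)$, with $x_0$ the given initial point. Path length: let $\theta_t=\arg\min_{x\in X}f_t(x)$ and $\theta_0=x_0$. For $0\le L_T\le DT$, $\mathcal L_T(L_T,\mathcal F_X(\alpha,l,G))$ is the set of sequences $\{f_t\}_{t=1}^T\subseteq\mathcal F_X(\alpha,l,G)$ with $\sum_{t=1}^T\|\theta_t-\theta_{t-1}\|\le L_T$. Dynamic regret: for an algorithm producing outputs $x^{\mathcal A}=(x^{\mathcal A}_1,\dots,x^{\mathcal A}_T)$ (with $x_0^{\mathcal A}=x_0$), $$\mathrm{Reg}(\mathcal A,\mathcal L_T)=\sup_{\{f_t\}\in\mathcal L_T}\Big(C_1^T(x^{\mathcal A})-\min_{x\in X^T}C_1^T(x)\Big).$$ Partial gradients: for $t<T$, $g_t(a,b,c)=\nabla f_t(b)+\beta(2b-a-c)$; for $t=T$, $g_T(a,b,c)=\nabla f_T(b)+\beta(b-a)$, which does not depend on $c$. RHGD (Receding Horizon Gradient Descent). For each $t\in[T]$ it produces iterates $x_t^s$ for $s=t-W,\dots,t$. - Initialization (online gradient descent): $x_1^{1-W}=x_0$, and for $2\le t\le T$, $$x_t^{t-W}=\Pi_X\big(x_{t-1}^{t-1-W}-\gamma\nabla f_{t-1}(x_{t-1}^{t-1-W})\big).$$ - Updates: for $s=t-W+1,\dots,t$, $$x_t^s=\Pi_X\big(x_t^{s-1}-\eta\, g_t(x_{t-1}^{s-2},x_t^{s-1},x_{t+1}^{s})\big),$$ with the convention $x_0^{s}=x_0$ for all $s$. At each stage $s$,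 the indices $t$ are processed in decreasing order. - Output at stage $t$: $x_t^t$. RHAG (Receding Horizon Accelerated Gradient). Set $\lambda=\frac{1-\sqrt{\alpha\eta}}{1+\sqrt{\alpha\eta}}$. - Initialization: $x_t^{t-W}$ is defined as in RHGD, and $y_t^{t-W}=x_t^{t-W}$. - Updates: for $s=t-W+1,\dots,t$, $$x_t^s=\Pi_X\big(y_t^{s-1}-\eta\, g_t(y_{t-1}^{s-2},y_t^{s-1},y_{t+1}^s)\big),\qquad y_t^s=(1+\lambda)x_t^s-\lambda x_t^{s-1},$$ with the convention $y_0^s=x_0$. - Output at stage $t$: $x_t^t$. *)

From HB Require Import structures.
From mathcomp Require Import all_boot all_order all_algebra.
From mathcomp Require Import all_classical all_reals all_analysis.
Set Implicit Arguments. Unset Strict Implicit. Unset Printing Implicit Defensive.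
Import Order.TTheory GRing.Theory Num.Theory.
Import numFieldNormedType.Exports.
Local Open Scope classical_set_scope.
Local Open Scope ring_scope.

Section Defs.
Variables (R : realType) (n : nat).
Notation vec := 'rV[R]_n.

Definition dotv (u v : vec) : R := \sum_(i < n) u 0 i * v 0 i.
Definition enorm (u : vec) : R := Num.sqrt (dotv u u).

(* gradient = row vector of partial derivatives (meaningful when f is differentiable) *)
Definition grad (f : vec -> R) (x : vec) : vec :=
  \row_(i < n) ('D_(delta_mx 0 i) f x).

Definition convexS (X : set vec) : Prop :=
  forall x y (lam : R), X x -> X y -> 0 <= lam -> lam <= 1 ->
    X (lam *: x + (1 - lam) *: y).

Definition is_proj (X : set vec) (z p : vec) : Prop :=
  X p /\ forall y, X y -> enorm (z - p) <= enorm (z - y).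

Definition in_class (X : set vec) (alpha l G : R) (f : vec -> R) : Prop :=
  (forall x, differentiable f x) /\
  (forall x y,
      f x + dotv (grad f x) (y - x) + alpha / 2 * enorm (y - x) ^+ 2 <= f y /\
      f y <= f x + dotv (grad f x) (y - x) + l / 2 * enorm (y - x) ^+ 2) /\
  (forall x, X x -> enorm (grad f x) <= G).

Definition is_argmin (X : set vec) (f : vec -> R) (theta : vec) : Prop :=
  X theta /\ forall x, X x -> f theta <= f x.

(* total cost C_1^T(x) with x_0 given; only x 1, ..., x T are used *)
Definition prevpt (x0 : vec) (x : nat -> vec) (t : nat) : vec :=
  if t is t'.+1 then (if t' is 0 then x0 else x t') else x0.

Definition cost (f : nat -> vec -> R) (beta : R) (x0 : vec) (T : nat)
    (x : nat -> vec) : R :=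
  \sum_(1 <= t < T.+1)
     (f t (x t) + beta / 2 * enorm (x t - prevpt x0 x t) ^+ 2).

Definition path_length (x0 : vec) (T : nat) (theta : nat -> vec) : R :=
  \sum_(1 <= t < T.+1) enorm (theta t - prevpt x0 theta t).

Definition pgrad (f : nat -> vec -> R) (beta : R) (T t : nat) (a b c : vec) : vec :=
  if (t < T)%N then grad (f t) b + beta *: (2%:R *: b - a - c)
  else grad (f t) b + beta *: (b - a).

(* OGD initialization: ogd k = x_{k+1}^{k+1-W} *)
Fixpoint ogd (proj : vec -> vec) (f : nat -> vec -> R) (gamma : R) (x0 : vec)
    (k : nat) : vec :=
  if k is k'.+1 then
    let z := ogd proj f gamma x0 k' in proj (z - gamma *: grad (f k) z)
  else x0.

(* init t = x_t^{t-W} for t >= 1 *)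
Definition init proj f gamma x0 (t : nat) : vec := ogd proj f gamma x0 t.-1.

(* RHGD: rhgd_it j t = x_t^{t-W+j} for t >= 1, and x_0 for t = 0.
   The update x_t^s uses x_{t-1}^{s-2}, x_t^{s-1}, x_{t+1}^s, which are all
   iterates with index j-1 in this parametrization. *)
Fixpoint rhgd_it proj f (beta gamma eta : R) (x0 : vec) (T : nat) (j : nat)
    (t : nat) : vec :=
  if t is 0 then x0 else
  match j with
  | 0 => init proj f gamma x0 t
  | j'.+1 =>
      let P := rhgd_it proj f beta gamma eta x0 T j' in
      proj (P t - eta *: pgrad f beta T t (P t.-1) (P t) (P t.+1))
  end.

Definition rhgd_out proj f beta gamma eta x0 T (W : nat) (t : nat) : vec :=
  rhgd_it proj f beta gamma eta x0 T W t.

(* RHAG: rhag_it j t = (x_t^{t-W+j}, y_t^{t-W+j}) for t >= 1, (x0, x0) for t = 0 *)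
Fixpoint rhag_it proj f (beta gamma eta lam : R) (x0 : vec) (T : nat) (j : nat)
    (t : nat) : vec * vec :=
  if t is 0 then (x0, x0) else
  match j with
  | 0 => (init proj f gamma x0 t, init proj f gamma x0 t)
  | j'.+1 =>
      let Y := fun u => (rhag_it proj f beta gamma eta lam x0 T j' u).2 in
      let xold := (rhag_it proj f beta gamma eta lam x0 T j' t).1 in
      let xnew := proj (Y t - eta *: pgrad f beta T t (Y t.-1) (Y t) (Y t.+1)) in
      (xnew, (1 + lam) *: xnew - lam *: xold)
  end.

Definition rhag_out proj f beta gamma eta lam x0 T (W : nat) (t : nat) : vec :=
  (rhag_it proj f beta gamma eta lam x0 T W t).1.

End Defs.

(* The cost C is, on X^T with the inner product summed over stages, strongly
   convex with modulus alpha and smooth with constant L = l + 4 beta, and the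
   partial gradients g_t are exactly its gradient.  Hence every RHGD stage is a
   projected gradient step on C with step 1/L, which contracts the optimality gap
   by 1 - alpha/L, and RHAG is Nesterov's accelerated projected gradient method,
   whose Lyapunov function contracts by 1 - sqrt (alpha/L).  In Nesterov's bound
   the term alpha/2 |x - z|^2 at a near minimizer z is at most the initial gap,
   which gives the factor 2.  Both methods start from online gradient descent,
   which contracts the distance to theta_t by kappa at every stage; so these
   distances sum to at most L_T / (1 - kappa) and the initial gap is at most
   delta L_T. *)

From HB Require Import structures.
From mathcomp Require Import all_boot all_order all_algebra.
From mathcomp Require Import all_classical all_reals all_analysis.
From mathcomp Require Import ring lra.
Import Order.TTheory GRing.Theory Num.Theory.
Import numFieldNormedType.Exports.
Local Open Scope classical_set_scope.
Local Open Scope ring_scope.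
Set Implicit Arguments. Unset Strict Implicit. Unset Printing Implicit Defensive.

Lemma le0_of_le_small_multiples (R : realFieldType) (a b : R) :
  (forall s, 0 < s -> s <= 1 -> a <= s * b) -> a <= 0.
Proof.
move=> small; rewrite leNgt; apply/negP => a_gt0.
have c_gt0 : 0 < a + `|b| by rewrite ltr_pwDl.
have s_gt0 : 0 < a / (a + `|b|) by rewrite divr_gt0.
have s_le1 : a / (a + `|b|) <= 1 by rewrite ler_pdivrMr // mul1r lerDl.
have := small _ s_gt0 s_le1.
have : a / (a + `|b|) * b <= a / (a + `|b|) * `|b|.
  by apply: ler_wpM2l; [exact: ltW | exact: ler_norm].
have : a / (a + `|b|) * `|b| < a.
  rewrite mulrAC ltr_pdivrMr // mulrDr ltrDr.
  by rewrite mulr_gt0.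
lra.
Qed.

Lemma le_twice_of_near (R : realFieldType) (V c : R) : 0 <= c ->
    (forall s eps, 0 < s -> s < 1 -> 0 < eps ->
       s * (1 - s) * V <= s * (2 - s) * c + eps) ->
  V <= 2 * c.
Proof.
move=> c_ge0 near.
have le_s s : 0 < s -> s < 1 -> (1 - s) * V <= (2 - s) * c.
  move=> s_gt0 s_lt1; rewrite -(ler_pM2l s_gt0) !mulrA.
  by apply/ler_addgt0Pr => eps; exact: near.
rewrite -subr_le0; apply: (@le0_of_le_small_multiples _ _ (V - c)) => s s_gt0.
rewrite le_eqVlt => /orP[/eqP -> | s_lt1]; first lra.
by have := le_s s s_gt0 s_lt1; rewrite !mulrBl !mul1r; lra.
Qed.

(** * Gradient methods in a real inner-product space *)

Section InnerProduct.
Variables (R : realFieldType) (V : lmodType R) (ip : V -> V -> R).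
Hypothesis ipDl : forall u v w, ip (u + v) w = ip u w + ip v w.
Hypothesis ipZl : forall a u w, ip (a *: u) w = a * ip u w.
Hypothesis ipC : forall u v, ip u v = ip v u.
Hypothesis ip_ge0 : forall u, 0 <= ip u u.

Definition sqnorm u := ip u u.

Definition convex_pred (S : V -> Prop) := forall x y lam,
  S x -> S y -> 0 <= lam -> lam <= 1 -> S (lam *: x + (1 - lam) *: y).

Lemma sqnorm_ge0 u : 0 <= sqnorm u. Proof. exact: ip_ge0. Qed.

Lemma ipDr u v w : ip w (u + v) = ip w u + ip w v.
Proof. by rewrite ipC ipDl ipC (ipC v). Qed.

Lemma ipZr a u w : ip w (a *: u) = a * ip w u.
Proof. by rewrite ipC ipZl ipC. Qed.

Lemma ipNl u w : ip (- u) w = - ip u w.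
Proof. by rewrite -scaleN1r ipZl mulN1r. Qed.

Lemma ipNr u w : ip w (- u) = - ip w u.
Proof. by rewrite ipC ipNl ipC. Qed.

Ltac ip_expand := rewrite /sqnorm ?(ipDl, ipDr, ipZl, ipZr, ipNl, ipNr).

Lemma sqr_ip_le u v : ip u v ^+ 2 <= sqnorm u * sqnorm v.
Proof.
rewrite /sqnorm; set a := ip u u; set b := ip u v; set c := ip v v.
have c_ge0 : 0 <= c by exact: ip_ge0.
have a_ge0 : 0 <= a by exact: ip_ge0.
have Ec : ip (c *: u - b *: v) (c *: u - b *: v) = c * (a * c - b ^+ 2).
  by ip_expand; rewrite -/a -/b -/c (ipC v u) -/b; ring.
have Ea : ip (a *: v - b *: u) (a *: v - b *: u) = a * (a * c - b ^+ 2).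
  by ip_expand; rewrite -/a -/b -/c (ipC v u) -/b; ring.
rewrite -subr_ge0.
have [c_gt0|] := ltP 0 c; first by rewrite -(pmulr_rge0 _ c_gt0) -Ec ip_ge0.
have [a_gt0|] := ltP 0 a; first by rewrite -(pmulr_rge0 _ a_gt0) -Ea ip_ge0.
move=> a_le0 c_le0.
have h1 := ip_ge0 (u - v); have h2 := ip_ge0 (u + v).
move: h1 h2; ip_expand; rewrite -/a -/b -/c (ipC v u) -/b => h1 h2.
have -> : b = 0 by lra.
have -> : a = 0 by lra.
by rewrite mul0r expr0n /= subr0.
Qed.

Lemma proj_variational_ineq (S : V -> Prop) z p : convex_pred S -> S p ->
    (forall y, S y -> sqnorm (z - p) <= sqnorm (z - y)) ->
  forall w, S w -> ip (z - p) (w - p) <= 0.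
Proof.
move=> convS Sp p_min w Sw.
suff : 2 * ip (z - p) (w - p) <= 0 by lra.
apply: (@le0_of_le_small_multiples _ _ (ip (w - p) (w - p))) => s s_gt0 s_le1.
move: (p_min _ (convS _ _ s Sw Sp (ltW s_gt0) s_le1)) => p_le.
rewrite -(ler_pM2l s_gt0); move: p_le; ip_expand.
rewrite ?(ipC w z) ?(ipC p z) ?(ipC p w).
lra.
Qed.

Section ProjectedGradient.
Variables (S : V -> Prop) (C : V -> R) (g : V -> V) (L al : R).
Hypothesis convS : convex_pred S.
Hypothesis C_smooth : forall x z,
  C z <= C x + ip (g x) (z - x) + L / 2 * sqnorm (z - x).
Hypothesis C_strong : forall x z,
  C x + ip (g x) (z - x) + al / 2 * sqnorm (z - x) <= C z.
Hypothesis al_gt0 : 0 < al.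
Hypothesis al_le_L : al <= L.

Definition proj_grad_step y p := S p /\
  forall z, S z -> sqnorm (y - L^-1 *: g y - p) <= sqnorm (y - L^-1 *: g y - z).

Lemma L_gt0 : 0 < L. Proof. exact: lt_le_trans al_gt0 al_le_L. Qed.

Lemma proj_grad_step_le y p w : proj_grad_step y p -> S w ->
  C p <= C w + L * ip (y - p) (y - w) - L / 2 * sqnorm (y - p)
         - al / 2 * sqnorm (y - w).
Proof.
move=> [Sp p_min] Sw.
have vi := proj_variational_ineq convS Sp p_min Sw.
have up := C_smooth y p; have lo := C_strong y w.
have vi' : L * ip (y - L^-1 *: g y - p) (w - p) <= 0.
  by rewrite pmulr_rle0 // L_gt0.
move: vi' up lo; ip_expand.
rewrite ?(ipC w y) ?(ipC p y) ?(ipC p w) ?(ipC (g y) y) ?(ipC (g y) w).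
rewrite ?(ipC (g y) p) ?(ipC y (g y)) ?(ipC w (g y)) ?(ipC p (g y)).
have LV : L * L^-1 = 1 by rewrite mulfV // gt_eqF // L_gt0.
rewrite !mulrDr !mulrN !mulrA LV !mul1r.
lra.
Qed.

Lemma strong_convex_comb u w s : 0 <= s -> s <= 1 ->
  C (s *: u + (1 - s) *: w)
    <= s * C u + (1 - s) * C w - al / 2 * (s * (1 - s)) * sqnorm (u - w).
Proof.
move=> s_ge0 s_le1; set m := s *: u + (1 - s) *: w.
have e1 : s * (C m + ip (g m) (u - m) + al / 2 * sqnorm (u - m)) <= s * C u.
  by rewrite ler_wpM2l.
have e2 : (1 - s) * (C m + ip (g m) (w - m) + al / 2 * sqnorm (w - m))
    <= (1 - s) * C w.
  by rewrite ler_wpM2l // subr_ge0.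
move: e1 e2; rewrite /m; ip_expand.
rewrite ?(ipC w u) ?(ipC (g m) u) ?(ipC (g m) w) ?(ipC w (g m)) ?(ipC u (g m)).
rewrite /m; nra.
Qed.

Lemma proj_grad_three_point y p w : proj_grad_step y p -> S w ->
  C p <= C w + (L - al) / 2 * sqnorm (y - w) - L / 2 * sqnorm (p - w).
Proof.
move=> st Sw; have := proj_grad_step_le st Sw; ip_expand.
rewrite ?(ipC w y) ?(ipC p y) ?(ipC p w).
lra.
Qed.

Lemma proj_grad_gap_contraction x p w : S x -> S w -> proj_grad_step x p ->
  C p - C w <= (1 - al / L) * (C x - C w).
Proof.
move=> Sx Sw st.
have L_pos := L_gt0; set s := al / L.
have s_ge0 : 0 <= s by rewrite /s divr_ge0 // ltW.
have s_le1 : s <= 1 by rewrite /s ler_pdivrMr // mul1r.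
have eal : al = L * s by rewrite /s mulrC mulfVK // gt_eqF.
have k := proj_grad_step_le st (convS Sw Sx s_ge0 s_le1).
have sc := strong_convex_comb w x s_ge0 s_le1.
have nn : 0 <= L / 2 * sqnorm ((x - p) - s *: (x - w)).
  by rewrite mulr_ge0 ?sqnorm_ge0 // divr_ge0 // ltW.
move: k sc nn; rewrite eal; ip_expand.
rewrite ?(ipC w x) ?(ipC p x) ?(ipC p w).
lra.
Qed.

Lemma near_min_sqnorm_le x z eps s : S x -> S z ->
    (forall w, S w -> C z <= C w + eps) -> 0 <= s -> s <= 1 ->
  al / 2 * (s * (1 - s)) * sqnorm (x - z) <= s * (C x - C z) + eps.
Proof.
move=> Sx Sz z_min s_ge0 s_le1.
have := strong_convex_comb x z s_ge0 s_le1.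
have := z_min _ (convS Sx Sz s_ge0 s_le1).
lra.
Qed.

Section Accelerated.
Variables (xs ys : nat -> V) (rho : R).
Hypothesis rho_gt0 : 0 < rho.
Hypothesis rho_le1 : rho <= 1.
Hypothesis al_rho : al = rho ^+ 2 * L.
Hypothesis S_xs0 : S (xs 0).
Hypothesis ys0 : ys 0 = xs 0.
Hypothesis xs_step : forall k, proj_grad_step (ys k) (xs k.+1).
Hypothesis ysS : forall k,
  ys k.+1 = xs k.+1 + (1 - rho) / (1 + rho) *: (xs k.+1 - xs k).

Let xprev k := if k is k'.+1 then xs k' else xs 0.

(* [vs k] is the estimate-sequence point of Nesterov's method and [potential]
   its Lyapunov function. *)
Let vs k := xprev k + rho^-1 *: (xs k - xprev k).
Let potential w k := C (xs k) - C w + al / 2 * sqnorm (vs k - w).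

Lemma ys_xprev k : ys k = xs k + (1 - rho) / (1 + rho) *: (xs k - xprev k).
Proof. by case: k => [|k] /=; [rewrite ys0 subrr scaler0 addr0 | exact: ysS]. Qed.

Lemma S_xs k : S (xs k).
Proof. by case: k => [|k] //; case: (xs_step k). Qed.

Lemma potential_contraction w k : S w ->
  potential w k.+1 <= (1 - rho) * potential w k.
Proof.
move=> Sw.
have k1 := proj_grad_step_le (xs_step k) Sw.
have k2 := proj_grad_step_le (xs_step k) (S_xs k).
set y := ys k in k1 k2; set x' := xs k.+1 in k1 k2.
pose R1 := C w + L * ip (y - x') (y - w) - L / 2 * sqnorm (y - x')
  - al / 2 * sqnorm (y - w).
pose R2 := C (xs k) + L * ip (y - x') (y - xs k) - L / 2 * sqnorm (y - x')
  - al / 2 * sqnorm (y - xs k).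
(* The decrease is a convex combination of the two step bounds plus squares. *)
have E : (1 - rho) * potential w k - potential w k.+1 =
    rho * (R1 - C x') + (1 - rho) * (R2 - C x')
    + al / 2 * rho * (1 - rho) * sqnorm (vs k - y)
    + (1 - rho) * (al / 2 * sqnorm (y - xs k)).
  rewrite /potential /R1 /R2 /y ys_xprev /vs /x' /=; ip_expand.
  rewrite ?(ipC (xprev k) (xs k)) ?(ipC w (xs k)) ?(ipC (xs k.+1) (xs k))
          ?(ipC w (xprev k)) ?(ipC (xs k.+1) (xprev k)) ?(ipC (xs k.+1) w).
  rewrite al_rho; field.
  by rewrite !gt_eqF ?addr_gt0 ?ltr01.
have rho' : 0 <= 1 - rho by rewrite subr_ge0.
have al2 : 0 <= al / 2 by rewrite divr_ge0 // ltW.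
have n1 : 0 <= al / 2 * rho * (1 - rho) * sqnorm (vs k - y).
  by rewrite mulr_ge0 ?sqnorm_ge0 // mulr_ge0 // mulr_ge0 // ltW.
have n2 : 0 <= (1 - rho) * (al / 2 * sqnorm (y - xs k)).
  by rewrite mulr_ge0 // mulr_ge0 ?sqnorm_ge0.
have n3 : 0 <= rho * (R1 - C x') by rewrite mulr_ge0 ?(ltW rho_gt0) // subr_ge0.
have n4 : 0 <= (1 - rho) * (R2 - C x') by rewrite mulr_ge0 // subr_ge0.
lra.
Qed.

Lemma accel_gap_le w k : S w ->
  C (xs k) - C w
    <= (1 - rho) ^+ k * (C (xs 0) - C w + al / 2 * sqnorm (xs 0 - w)).
Proof.
move=> Sw.
have -> : C (xs 0) - C w + al / 2 * sqnorm (xs 0 - w) = potential w 0.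
  by rewrite /potential /vs /= subrr scaler0 addr0.
have le_potential : C (xs k) - C w <= potential w k.
  by rewrite /potential lerDl mulr_ge0 ?sqnorm_ge0 // divr_ge0 // ltW.
apply: le_trans le_potential _.
have rho' : 0 <= 1 - rho by rewrite subr_ge0.
elim: k => [|k IH]; first by rewrite expr0 mul1r.
apply: le_trans (potential_contraction k Sw) _.
by rewrite exprS -mulrA ler_wpM2l.
Qed.

(* For an [eps]-minimizer [z], strong convexity bounds the distance term of
   [accel_gap_le], so no exact minimizer of [C] is needed. *)
Lemma accel_gap_le_near_min w z eps s k : S w -> S z ->
    (forall w', S w' -> C z <= C w' + eps) -> 0 <= s -> s <= 1 ->
  s * (1 - s) * (C (xs k) - C w)
    <= s * (2 - s) * ((1 - rho) ^+ k * (C (xs 0) - C z)) + 2 * eps.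
Proof.
move=> Sw Sz z_min s_ge0 s_le1.
set q := (1 - rho) ^+ k.
have q_ge0 : 0 <= q by rewrite exprn_ge0 // subr_ge0.
have q_le1 : q <= 1 by rewrite exprn_ile1 // ?subr_ge0 // lerBlDr lerDl ltW.
have eps_ge0 : 0 <= eps by have := z_min _ Sz; lra.
have ss_ge0 : 0 <= s * (1 - s) by rewrite mulr_ge0 // subr_ge0.
have ss_le1 : s * (1 - s) <= 1.
  by rewrite (le_trans (ler_piMr _ _)) // ?subr_ge0 // lerBlDr lerDl.
set A := al / 2 * sqnorm (xs 0 - z).
have gap_z := accel_gap_le k Sz; rewrite -/q -/A in gap_z.
have dist_z := near_min_sqnorm_le (S_xs 0) Sz z_min s_ge0 s_le1.
have m1 : s * (1 - s) * (C (xs k) - C w)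
    <= s * (1 - s) * (q * (C (xs 0) - C z + A) + eps).
  by rewrite ler_wpM2l //; have := z_min _ Sw; lra.
have m2 : q * (s * (1 - s) * A) <= q * (s * (C (xs 0) - C z) + eps).
  by rewrite ler_wpM2l //; move: dist_z; rewrite /A; lra.
have m3 : q * eps <= eps by rewrite ler_piMl.
have m4 : s * (1 - s) * eps <= eps by rewrite ler_piMl.
lra.
Qed.

End Accelerated.

End ProjectedGradient.

End InnerProduct.

Section Euclidean.
Context {R : realType} {n : nat}.
Implicit Types u v w : 'rV[R]_n.

Lemma dotvDl u v w : dotv (u + v) w = dotv u w + dotv v w.
Proof. by rewrite /dotv -big_split; apply: eq_bigr => i _; rewrite mxE mulrDl. Qed.

Lemma dotvZl a u w : dotv (a *: u) w = a * dotv u w.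
Proof. by rewrite /dotv mulr_sumr; apply: eq_bigr => i _; rewrite mxE mulrA. Qed.

Lemma dotvC u v : dotv u v = dotv v u.
Proof. by apply: eq_bigr => i _; rewrite mulrC. Qed.

Lemma dotv_ge0 u : 0 <= dotv u u.
Proof. by apply: sumr_ge0 => i _; rewrite -expr2 sqr_ge0. Qed.

Lemma dotvDr u v w : dotv w (u + v) = dotv w u + dotv w v.
Proof. exact: (ipDr dotvDl dotvC). Qed.

Lemma dotvNl u w : dotv (- u) w = - dotv u w.
Proof. exact: (ipNl dotvZl). Qed.

Lemma dotvNr u w : dotv w (- u) = - dotv w u.
Proof. exact: (ipNr dotvZl dotvC). Qed.

Lemma dotv0r u : dotv u 0 = 0.
Proof. by rewrite /dotv big1 // => i _; rewrite mxE mulr0. Qed.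

Lemma enorm_ge0 u : 0 <= enorm u.
Proof. exact: sqrtr_ge0. Qed.

Lemma enorm_sqr u : enorm u ^+ 2 = dotv u u.
Proof. by rewrite /enorm sqr_sqrtr // dotv_ge0. Qed.

Lemma enorm0 : enorm (0 : 'rV[R]_n) = 0.
Proof. by rewrite /enorm dotv0r sqrtr0. Qed.

Lemma enormB u v : enorm (u - v) = enorm (v - u).
Proof. by rewrite /enorm -opprB dotvNl dotvNr opprK. Qed.

Lemma dotv_le_enorm u v : dotv u v <= enorm u * enorm v.
Proof.
rewrite /enorm -sqrtrM ?dotv_ge0 // (le_trans (ler_norm _)) // -sqrtr_sqr.
by rewrite ler_wsqrtr //; exact: (sqr_ip_le dotvDl dotvZl dotvC dotv_ge0).
Qed.

Lemma enormD_le u v : enorm (u + v) <= enorm u + enorm v.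
Proof.
have sqr_le : enorm (u + v) ^+ 2 <= (enorm u + enorm v) ^+ 2.
  rewrite sqrrD !enorm_sqr dotvDl !dotvDr (dotvC v u).
  have := dotv_le_enorm u v; lra.
by rewrite -(ler_pXn2r (_ : 0 < 2)%N) ?nnegrE ?addr_ge0 ?enorm_ge0.
Qed.

End Euclidean.

(** * The receding-horizon cost and its algorithms *)

Section RecedingHorizon.
Variables (R : realType) (n : nat).
Local Notation vec := 'rV[R]_n.
Local Notation traj := (nat -> vec).
Variables (X : set vec) (beta : R) (x0 : vec) (T : nat) (alpha l G : R)
  (proj : vec -> vec) (f : nat -> vec -> R).
Hypothesis convX : convexS X.
Hypothesis beta_ge0 : 0 <= beta.
Hypothesis X_x0 : X x0.
Hypothesis T_gt0 : (1 <= T)%N.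
Hypothesis alpha_gt0 : 0 < alpha.
Hypothesis alpha_le_l : alpha <= l.
Hypothesis projP : forall z, is_proj X z (proj z).
Hypothesis f_class : forall t, (1 <= t <= T)%N -> in_class X alpha l G (f t).

Definition dotT (u v : traj) := \sum_(1 <= t < T.+1) dotv (u t) (v t).

Lemma dotTDl u v w : dotT (u + v) w = dotT u w + dotT v w.
Proof. by rewrite /dotT -big_split; apply: eq_bigr => t _; rewrite dotvDl. Qed.

Lemma dotTZl a u w : dotT (a *: u) w = a * dotT u w.
Proof. by rewrite /dotT mulr_sumr; apply: eq_bigr => t _; rewrite dotvZl. Qed.

Lemma dotTC u v : dotT u v = dotT v u.
Proof. by apply: eq_bigr => t _; rewrite dotvC. Qed.

Lemma dotT_ge0 u : 0 <= dotT u u.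
Proof. by apply: sumr_ge0 => t _; exact: dotv_ge0. Qed.

Definition inX (u : traj) := forall t, (1 <= t <= T)%N -> X (u t).

Lemma convex_inX : convex_pred inX.
Proof.
by move=> x y lam Xx Xy lam0 lam1 t Ht; apply: convX; [apply: Xx|apply: Xy|..].
Qed.

Local Notation C := (cost f beta x0 T).

Definition cost_grad (x : traj) : traj :=
  fun t => pgrad f beta T t (prevpt x0 x t) (x t) (x t.+1).

Definition incr (a : vec) (x : traj) t := x t - prevpt a x t.

Definition bregman (g : vec -> R) (x z : vec) :=
  g z - g x - dotv (grad g x) (z - x).

Lemma prevpt_succ a (x : traj) t : (1 <= t)%N -> prevpt a x t.+1 = x t.
Proof. by case: t. Qed.

Lemma incrD (z x : traj) t : incr x0 z t = incr x0 x t + incr 0 (z - x) t.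
Proof.
rewrite /incr; have -> : (z - x) t = z t - x t by [].
have -> : prevpt 0 (z - x) t = prevpt x0 z t - prevpt x0 x t.
  by case: t => [|[|t]] /=; rewrite ?subrr.
by apply/rowP => i; rewrite !mxE; ring.
Qed.

Lemma sum_prevpt0 (F : nat -> vec -> R) (h : traj) : (forall t, F t 0 = 0) ->
  \sum_(1 <= t < T.+1) F t (prevpt 0 h t) = \sum_(1 <= t < T) F t.+1 (h t).
Proof.
move=> F0; rewrite big_nat_recl // F0 add0r.
by apply: eq_big_nat => t /andP[t_gt0 _]; rewrite prevpt_succ.
Qed.

Lemma sum_by_parts (d h : traj) :
  \sum_(1 <= t < T.+1) dotv (d t) (incr 0 h t)
  = \sum_(1 <= t < T.+1) dotv (d t - (if (t < T)%N then d t.+1 else 0)) (h t).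
Proof.
under eq_bigr do rewrite /incr dotvDr dotvNr.
under [RHS]eq_bigr do rewrite dotvDl dotvNl.
rewrite !sumrB (@sum_prevpt0 (fun t v => dotv (d t) v)) => [|t]; last exact: dotv0r.
congr (_ - _); rewrite big_nat_recr //= ltnn (dotvC 0) dotv0r addr0.
by apply: eq_big_nat => t /andP[_ ->].
Qed.

Lemma cost_gradE x t : (1 <= t)%N -> cost_grad x t
  = grad (f t) (x t)
    + beta *: (incr x0 x t - (if (t < T)%N then incr x0 x t.+1 else 0)).
Proof.
move=> t_gt0; rewrite /cost_grad /pgrad /incr prevpt_succ //.
case: ifP => _; last by rewrite subr0.
by congr (_ + beta *: _); apply/rowP => i; rewrite !mxE; ring.
Qed.

Lemma cost_term_expand (x z : traj) t :
  f t (z t) + beta / 2 * enorm (incr x0 z t) ^+ 2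
  = f t (x t) + beta / 2 * enorm (incr x0 x t) ^+ 2
    + dotv (grad (f t) (x t)) ((z - x) t) + bregman (f t) (x t) (z t)
    + beta * dotv (incr x0 x t) (incr 0 (z - x) t)
    + beta / 2 * enorm (incr 0 (z - x) t) ^+ 2.
Proof.
rewrite (incrD z x) /bregman; move: (incr x0 x t) (incr 0 (z - x) t) => a e.
rewrite !enorm_sqr dotvDl !dotvDr (dotvC e a).
lra.
Qed.

Lemma costE (y : traj) :
  C y = \sum_(1 <= t < T.+1) (f t (y t) + beta / 2 * enorm (incr x0 y t) ^+ 2).
Proof. by []. Qed.

Lemma cost_expand x z : C z = C x + dotT (cost_grad x) (z - x)
  + \sum_(1 <= t < T.+1) bregman (f t) (x t) (z t)
  + beta / 2 * \sum_(1 <= t < T.+1) enorm (incr 0 (z - x) t) ^+ 2.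
Proof.
rewrite !costE (eq_bigr _ (fun t _ => cost_term_expand x z t)) /dotT.
under [X in _ = _ + X + _ + _]eq_big_nat => t /andP[t_gt0 _]
  do rewrite cost_gradE // dotvDl dotvZl.
rewrite !big_split /= -!mulr_sumr sum_by_parts.
ring.
Qed.

Lemma sum_sqr_incr0_le h :
  \sum_(1 <= t < T.+1) enorm (incr 0 h t) ^+ 2 <= 4%:R * dotT h h.
Proof.
have incr_le t : enorm (incr 0 h t) ^+ 2
    <= 2 * dotv (h t) (h t) + 2 * dotv (prevpt 0 h t) (prevpt 0 h t).
  have := dotv_ge0 (h t + prevpt 0 h t).
  rewrite /incr enorm_sqr !(dotvDl, dotvDr, dotvNl, dotvNr).
  rewrite (dotvC (prevpt 0 h t) (h t)); lra.
apply: le_trans (ler_sum_nat (fun t _ => incr_le t)) _.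
rewrite big_split /= -!mulr_sumr.
rewrite (@sum_prevpt0 (fun _ v => dotv v v)) => [|t]; last exact: dotv0r.
have : \sum_(1 <= t < T) dotv (h t) (h t) <= dotT h h.
  by rewrite /dotT big_nat_recr //= lerDl dotv_ge0.
rewrite /dotT; lra.
Qed.

Lemma bregman_bounds x z t : (1 <= t <= T)%N ->
  alpha / 2 * dotv (z - x) (z - x) <= bregman (f t) x z
    <= l / 2 * dotv (z - x) (z - x).
Proof.
move=> /f_class[_ [/(_ x z) [lo up] _]].
by rewrite -enorm_sqr /bregman; apply/andP; split; lra.
Qed.

Local Notation L := (l + 4%:R * beta).

Lemma cost_smooth x z :
  C z <= C x + dotT (cost_grad x) (z - x) + L / 2 * sqnorm dotT (z - x).
Proof.
rewrite (cost_expand x z) /sqnorm.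
have breg_le : \sum_(1 <= t < T.+1) bregman (f t) (x t) (z t)
    <= l / 2 * dotT (z - x) (z - x).
  rewrite /dotT mulr_sumr; apply: ler_sum_nat => t Ht.
  by have /andP[_ ->] := bregman_bounds (x t) (z t) Ht.
have beta2 : 0 <= beta / 2 by rewrite divr_ge0.
have := ler_wpM2l beta2 (sum_sqr_incr0_le (z - x)); lra.
Qed.

Lemma cost_strong x z :
  C x + dotT (cost_grad x) (z - x) + alpha / 2 * sqnorm dotT (z - x) <= C z.
Proof.
rewrite (cost_expand x z) /sqnorm.
have le_breg : alpha / 2 * dotT (z - x) (z - x)
    <= \sum_(1 <= t < T.+1) bregman (f t) (x t) (z t).
  rewrite /dotT mulr_sumr; apply: ler_sum_nat => t Ht.
  by have /andP[-> _] := bregman_bounds (x t) (z t) Ht.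
have : 0 <= beta / 2 * \sum_(1 <= t < T.+1) enorm (incr 0 (z - x) t) ^+ 2.
  by rewrite mulr_ge0 ?divr_ge0 // sumr_ge0 // => t _; rewrite sqr_ge0.
lra.
Qed.

Local Notation gamma := l^-1.
Local Notation eta := L^-1.

Lemma l_gt0 : 0 < l. Proof. exact: lt_le_trans alpha_gt0 alpha_le_l. Qed.

Lemma alpha_le_L : alpha <= L.
Proof. by apply: le_trans alpha_le_l _; rewrite lerDl mulr_ge0. Qed.

Let L_pos : 0 < L := L_gt0 alpha_gt0 alpha_le_L.

Lemma X_proj z : X (proj z). Proof. by case: (projP z). Qed.

Lemma X_ogd k : X (ogd proj f gamma x0 k).
Proof. by case: k => [|k] //=; exact: X_proj. Qed.

Lemma proj_sqr_le w z : X z ->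
  sqnorm (@dotv R n) (w - proj w) <= sqnorm (@dotv R n) (w - z).
Proof.
move=> Xz; rewrite /sqnorm -!enorm_sqr ler_pXn2r ?nnegrE ?enorm_ge0 //.
by case: (projP w) => _ /(_ _ Xz).
Qed.

Lemma prevpt_pred (y : traj) t : y 0 = x0 -> (1 <= t)%N -> prevpt x0 y t = y t.-1.
Proof. by move=> y0; case: t => [|[|t]]. Qed.

Lemma proj_grad_step_cost (y p : traj) : y 0 = x0 ->
    (forall t, (1 <= t <= T)%N -> p t = proj (y t - eta *: cost_grad y t)) ->
  proj_grad_step dotT inX cost_grad L y p.
Proof.
move=> y0 p_def; split=> [t Ht|z Xz]; first by rewrite p_def //; exact: X_proj.
apply: ler_sum_nat => t; rewrite ltnS => Ht.
change (sqnorm (@dotv R n) (y t - eta *: cost_grad y t - p t)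
  <= sqnorm (@dotv R n) (y t - eta *: cost_grad y t - z t)).
by rewrite p_def //; exact: proj_sqr_le (Xz _ Ht).
Qed.

Local Notation rhgd := (rhgd_it proj f beta gamma eta x0 T).

Lemma rhgd_step j : proj_grad_step dotT inX cost_grad L (rhgd j) (rhgd j.+1).
Proof.
apply: proj_grad_step_cost; first by case: j.
by move=> [|t] // _; rewrite /cost_grad (@prevpt_pred (rhgd j)) //; case: j.
Qed.

Lemma inX_rhgd j : inX (rhgd j).
Proof.
case: j => [|j]; last by case: (rhgd_step j).
by move=> [|t] // _; exact: X_ogd.
Qed.

Lemma rhgd_gap_le j w : inX w ->
  C (rhgd j) - C w <= (1 - alpha / L) ^+ j * (C (rhgd 0) - C w).
Proof.
move=> Xw; elim: j => [|j IH]; first by rewrite expr0 mul1r.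
have r_ge0 : 0 <= 1 - alpha / L by rewrite subr_ge0 ler_pdivrMr ?mul1r ?alpha_le_L.
apply: le_trans (proj_grad_gap_contraction dotTDl dotTZl dotTC dotT_ge0
  convex_inX cost_smooth cost_strong alpha_gt0 alpha_le_L
  (inX_rhgd j) Xw (rhgd_step j)) _.
by rewrite exprS -mulrA ler_wpM2l.
Qed.

Local Notation rho := (Num.sqrt (alpha * eta)).
Local Notation rhag k :=
  (rhag_it proj f beta gamma eta ((1 - rho) / (1 + rho)) x0 T k).
Local Notation rhag_x k := (fun t => (rhag k t).1).
Local Notation rhag_y k := (fun t => (rhag k t).2).

Lemma rho_sqr : rho ^+ 2 = alpha / L.
Proof.
by rewrite sqr_sqrtr // mulr_ge0 ?invr_ge0 // ltW.
Qed.

Lemma rho_gt0 : 0 < rho.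
Proof.
by rewrite sqrtr_gt0 mulr_gt0 // invr_gt0 L_pos.
Qed.

Lemma rho_le1 : rho <= 1.
Proof.
rewrite -(ler_pXn2r (_ : 0 < 2)%N) ?nnegrE ?ler01 ?sqrtr_ge0 //.
by rewrite rho_sqr expr1n ler_pdivrMr ?mul1r ?alpha_le_L.
Qed.

Lemma alpha_rho : alpha = rho ^+ 2 * L.
Proof.
by rewrite rho_sqr divfK // gt_eqF // L_pos.
Qed.

Lemma rhag_x0 : rhag_x 0 = rhgd 0.
Proof. by apply: funext => -[]. Qed.

Lemma rhag_y0 : rhag_y 0 = rhag_x 0.
Proof. by apply: funext => -[]. Qed.

Lemma rhag_step k : proj_grad_step dotT inX cost_grad L (rhag_y k) (rhag_x k.+1).
Proof.
apply: proj_grad_step_cost; first by case: k.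
by move=> [|t] // _; rewrite /cost_grad (@prevpt_pred (rhag_y k)) //; case: k.
Qed.

Lemma rhag_yS k : rhag_y k.+1
  = rhag_x k.+1 + (1 - rho) / (1 + rho) *: (rhag_x k.+1 - rhag_x k).
Proof.
apply: funext => t; change ((rhag k.+1 t).2
  = (rhag k.+1 t).1 + (1 - rho) / (1 + rho) *: ((rhag k.+1 t).1 - (rhag k t).1)).
case: t => [|t] /=; first by case: k => [|k]; rewrite /= subrr scaler0 addr0.
by rewrite scalerDl scale1r scalerBr addrA.
Qed.

Lemma rhag_gap_le_near_min w z eps s k : inX w -> inX z ->
    (forall w', inX w' -> C z <= C w' + eps) -> 0 <= s -> s <= 1 ->
  s * (1 - s) * (C (rhag_x k) - C w)
    <= s * (2 - s) * ((1 - rho) ^+ k * (C (rhgd 0) - C z)) + 2 * eps.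
Proof.
have X_rhag0 : inX (rhag_x 0) by rewrite rhag_x0; exact: inX_rhgd.
rewrite -rhag_x0.
exact: (accel_gap_le_near_min dotTDl dotTZl dotTC dotT_ge0 convex_inX
  cost_smooth cost_strong alpha_gt0 alpha_le_L rho_gt0 rho_le1 alpha_rho
  X_rhag0 rhag_y0 rhag_step rhag_yS).
Qed.

Variable theta : traj.
Hypothesis theta_min : forall t, (1 <= t <= T)%N -> is_argmin X (f t) (theta t).
Hypothesis G_gt0 : 0 < G.

Local Notation ogd_pt k := (ogd proj f gamma x0 k).
Local Notation kappa := (Num.sqrt (1 - alpha / l)).

Lemma kappa_sqr : kappa ^+ 2 = 1 - alpha / l.
Proof. by rewrite sqr_sqrtr // subr_ge0 ler_pdivrMr ?mul1r ?l_gt0. Qed.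

Lemma kappa_lt1 : kappa < 1.
Proof.
rewrite -(ltr_pXn2r (_ : 0 < 2)%N) ?nnegrE ?ler01 ?sqrtr_ge0 //.
by rewrite kappa_sqr expr1n ltrBlDr ltrDl divr_gt0 ?l_gt0.
Qed.

Lemma f_smooth k : (1 <= k <= T)%N -> forall x z,
  f k z <= f k x + dotv (grad (f k) x) (z - x) + l / 2 * sqnorm (@dotv R n) (z - x).
Proof.
by move=> /f_class[_ [f_bounds _]] x z; rewrite /sqnorm -enorm_sqr; case: (f_bounds x z).
Qed.

Lemma f_strong k : (1 <= k <= T)%N -> forall x z,
  f k x + dotv (grad (f k) x) (z - x) + alpha / 2 * sqnorm (@dotv R n) (z - x)
    <= f k z.
Proof.
by move=> /f_class[_ [f_bounds _]] x z; rewrite /sqnorm -enorm_sqr; case: (f_bounds x z).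
Qed.

Lemma ogd_step k : (1 <= k <= T)%N ->
  proj_grad_step (@dotv R n) X (grad (f k)) l (ogd_pt k.-1) (ogd_pt k).
Proof.
case: k => [//|k] _; split=> [|z Xz]; first exact: X_ogd.
exact: proj_sqr_le.
Qed.

Lemma ogd_dist_contraction k : (1 <= k <= T)%N ->
  enorm (ogd_pt k - theta k) <= kappa * enorm (ogd_pt k.-1 - theta k).
Proof.
move=> Hk; have [X_theta theta_le] := theta_min Hk.
have := proj_grad_three_point dotvDl dotvZl dotvC convX
  (f_smooth Hk) (f_strong Hk) alpha_gt0 alpha_le_l (ogd_step Hk) X_theta.
have := theta_le _ (X_ogd k) => f_le three_point.
have sqr_le : sqnorm (@dotv R n) (ogd_pt k - theta k)
    <= kappa ^+ 2 * sqnorm (@dotv R n) (ogd_pt k.-1 - theta k).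
  rewrite kappa_sqr -(ler_pM2l l_gt0) mulrA mulrBr mulr1 mulrCA.
  rewrite divff ?gt_eqF ?l_gt0 // mulr1; lra.
rewrite -(ler_pXn2r (_ : 0 < 2)%N) ?nnegrE ?mulr_ge0 ?enorm_ge0 ?sqrtr_ge0 //.
by rewrite exprMn !enorm_sqr.
Qed.

Lemma ogd_move_sqr_le k : (1 <= k <= T)%N ->
  enorm (ogd_pt k - ogd_pt k.-1) ^+ 2 <= gamma * G * enorm (ogd_pt k - ogd_pt k.-1).
Proof.
move=> Hk; have [X_ogd_k ogd_min] := ogd_step Hk.
have := proj_variational_ineq dotvDl dotvZl dotvC convX X_ogd_k ogd_min (X_ogd k.-1).
set g := grad (f k) (ogd_pt k.-1); set d := ogd_pt k.-1 - ogd_pt k.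
have -> : ogd_pt k.-1 - l^-1 *: g - ogd_pt k = d - gamma *: g by rewrite addrAC.
rewrite dotvDl dotvNl dotvZl => step_ineq.
have g_le : enorm g <= G by case: (f_class Hk) => _ [_]; apply; exact: X_ogd.
have gd_le : dotv g d <= G * enorm d.
  apply: le_trans (dotv_le_enorm g d) _.
  by rewrite ler_wpM2r ?enorm_ge0.
have gamma_ge0 : 0 <= gamma by rewrite invr_ge0 ltW ?l_gt0.
have := ler_wpM2l gamma_ge0 gd_le.
rewrite enormB -/d enorm_sqr; lra.
Qed.

Definition init_dist t := enorm (ogd_pt t.-1 - theta t).

Lemma init_dist_ge0 t : 0 <= init_dist t. Proof. exact: enorm_ge0. Qed.

Lemma init_dist_succ_le t : (1 <= t < T)%N ->
  init_dist t.+1 <= kappa * init_dist t + enorm (theta t.+1 - theta t).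
Proof.
case: t => [//|t] /andP[_ tT].
change (enorm (ogd_pt t.+1 - theta t.+2)
  <= kappa * enorm (ogd_pt t - theta t.+1) + enorm (theta t.+2 - theta t.+1)).
have -> : ogd_pt t.+1 - theta t.+2
    = (ogd_pt t.+1 - theta t.+1) + (theta t.+1 - theta t.+2) by rewrite addrA subrK.
apply: le_trans (enormD_le _ _) _.
have Ht : (1 <= t.+1 <= T)%N by rewrite /= ltnW.
by rewrite [enorm (theta t.+1 - _)]enormB lerD2r; exact: ogd_dist_contraction Ht.
Qed.

Lemma sum_init_dist_le :
  (1 - kappa) * \sum_(1 <= t < T.+1) init_dist t <= path_length x0 T theta.
Proof.
have kappa_ge0 : 0 <= kappa := sqrtr_ge0 _.
suff telescoped m : (1 <= m <= T)%N ->
    (1 - kappa) * \sum_(1 <= t < m.+1) init_dist t + kappa * init_dist m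
    <= \sum_(1 <= t < m.+1) enorm (theta t - prevpt x0 theta t).
  have := telescoped T; rewrite T_gt0 leqnn => /(_ isT).
  have := mulr_ge0 kappa_ge0 (init_dist_ge0 T); rewrite /path_length; lra.
elim: m => [//|[|m] IH] /= Hm.
  by rewrite !big_nat1 /init_dist /= enormB; lra.
rewrite big_nat_recr // [in X in _ <= X]big_nat_recr //=.
have := IH (ltnW Hm); have := init_dist_succ_le (t := m.+1) Hm; lra.
Qed.

Lemma rhgd0E t : (1 <= t)%N -> rhgd 0 t = ogd_pt t.-1.
Proof. by case: t. Qed.

Lemma f_gap_le t : (1 <= t <= T)%N ->
  f t (ogd_pt t.-1) - f t (theta t) <= G * init_dist t.
Proof.
move=> Ht; have := f_strong Ht (ogd_pt t.-1) (theta t).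
rewrite /init_dist; set o := ogd_pt t.-1; set g := grad (f t) o.
have g_le : enorm g <= G by case: (f_class Ht) => _ [_]; apply; exact: X_ogd.
have := ler_wpM2r (enorm_ge0 (o - theta t)) g_le.
have := dotv_le_enorm g (o - theta t).
have : 0 <= alpha / 2 * sqnorm (@dotv R n) (theta t - o).
  by rewrite mulr_ge0 ?divr_ge0 ?(ltW alpha_gt0) ?(sqnorm_ge0 dotv_ge0).
rewrite -(opprB o) dotvNr; lra.
Qed.

Lemma sum_sqr_move_le : \sum_(1 <= t < T.+1) enorm (incr x0 (rhgd 0) t) ^+ 2
  <= gamma * G * (1 + kappa) * \sum_(1 <= t < T.+1) init_dist t.
Proof.
have gG : 0 <= gamma * G by rewrite mulr_ge0 ?invr_ge0 ?(ltW l_gt0) ?(ltW G_gt0).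
have c_ge0 : 0 <= gamma * G * (1 + kappa) by rewrite mulr_ge0 ?addr_ge0 ?sqrtr_ge0.
have incr1 : incr x0 (rhgd 0) 1 = 0 by rewrite /incr /= subrr.
rewrite big_nat_recl // incr1 enorm0 expr0n add0r.
apply: (@le_trans _ _ (\sum_(1 <= t < T) gamma * G * (1 + kappa) * init_dist t)).
  apply: ler_sum_nat => t /andP[t_gt0 tT].
  have Ht : (1 <= t <= T)%N by rewrite t_gt0 ltnW.
  rewrite /incr prevpt_succ // (rhgd0E (ltn0Sn t)) (rhgd0E t_gt0).
  apply: le_trans (ogd_move_sqr_le Ht) _.
  have move_le : enorm (ogd_pt t - ogd_pt t.-1) <= (1 + kappa) * init_dist t.
    have -> : ogd_pt t - ogd_pt t.-1
        = (ogd_pt t - theta t) + (theta t - ogd_pt t.-1) by rewrite addrA subrK.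
    apply: le_trans (enormD_le _ _) _.
    have := ogd_dist_contraction Ht.
    rewrite [enorm (theta t - _)]enormB /init_dist; lra.
  by apply: le_trans (ler_wpM2l gG move_le) _; rewrite mulrA.
rewrite -mulr_sumr ler_wpM2l // [X in _ <= X]big_nat_recr //= lerDl.
exact: init_dist_ge0.
Qed.

Lemma sum_min_le_cost w : inX w -> \sum_(1 <= t < T.+1) f t (theta t) <= C w.
Proof.
move=> Xw; rewrite costE; apply: ler_sum_nat => t; rewrite ltnS => Ht.
have [_ /(_ _ (Xw _ Ht)) f_le] := theta_min Ht.
have : 0 <= beta / 2 * enorm (incr x0 w t) ^+ 2 by rewrite mulr_ge0 ?divr_ge0 ?sqr_ge0.
lra.
Qed.

Lemma init_gap_le w : inX w ->
  C (rhgd 0) - C w <= (1 + beta * gamma) * G * \sum_(1 <= t < T.+1) init_dist t.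
Proof.
move=> Xw; have := sum_min_le_cost Xw.
have f_gap : \sum_(1 <= t < T.+1) f t (rhgd 0 t) - \sum_(1 <= t < T.+1) f t (theta t)
    <= G * \sum_(1 <= t < T.+1) init_dist t.
  rewrite -sumrB mulr_sumr; apply: ler_sum_nat => t; rewrite ltnS => Ht.
  by case/andP: (Ht) => t_gt0 _; rewrite rhgd0E //; exact: f_gap_le.
have beta2 : 0 <= beta / 2 by rewrite divr_ge0.
have := ler_wpM2l beta2 sum_sqr_move_le.
have -> : C (rhgd 0) = \sum_(1 <= t < T.+1) f t (rhgd 0 t)
    + beta / 2 * \sum_(1 <= t < T.+1) enorm (incr x0 (rhgd 0) t) ^+ 2.
  by rewrite costE big_split mulr_sumr.
have S_ge0 : 0 <= \sum_(1 <= t < T.+1) init_dist t.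
  by rewrite sumr_ge0 // => t _; exact: init_dist_ge0.
have bgG : 0 <= beta * gamma * G.
  by rewrite !mulr_ge0 ?invr_ge0 ?(ltW l_gt0) ?(ltW G_gt0).
have := ler_wpM2l (mulr_ge0 bgG S_ge0) (ltW kappa_lt1).
lra.
Qed.

Local Notation delta := ((beta / l + 1) * (G / (1 - kappa))).

Lemma delta_ge0 : 0 <= delta.
Proof.
have k_gt0 : 0 < 1 - kappa by rewrite subr_gt0 kappa_lt1.
apply: mulr_ge0; first by rewrite addr_ge0 // divr_ge0 // ltW // l_gt0.
by rewrite divr_ge0 // ltW.
Qed.

Lemma init_gap_le_path LT w : inX w -> path_length x0 T theta <= LT ->
  C (rhgd 0) - C w <= delta * LT.
Proof.
move=> Xw PL; apply: le_trans (init_gap_le Xw) _.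
have k_gt0 : 0 < 1 - kappa by rewrite subr_gt0 kappa_lt1.
have S_le : \sum_(1 <= t < T.+1) init_dist t <= LT / (1 - kappa).
  by rewrite ler_pdivlMr // mulrC; exact: le_trans sum_init_dist_le PL.
have -> : delta * LT = (1 + beta * gamma) * G * (LT / (1 - kappa)).
  by field; rewrite !gt_eqF ?l_gt0.
rewrite ler_wpM2l // mulr_ge0 ?(ltW G_gt0) // addr_ge0 // mulr_ge0 //.
by rewrite invr_ge0 ltW // l_gt0.
Qed.

Lemma exists_near_min eps : 0 < eps ->
  exists2 z, inX z & forall w, inX w -> C z <= C w + eps.
Proof.
move=> eps_gt0.
have C_inf : has_inf (C @` inX).
  split; first by exists (C (rhgd 0)), (rhgd 0) => //; exact: inX_rhgd.
  exists (\sum_(1 <= t < T.+1) f t (theta t)) => _ [w Xw <-].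
  exact: sum_min_le_cost.
have [_ [z Xz <-] z_lt] := inf_adherent eps_gt0 C_inf.
exists z => // w Xw; apply: le_trans (ltW z_lt) _.
rewrite lerD2r; apply: ge_inf; first by case: C_inf.
by exists w.
Qed.

Lemma rhgd_regret_le W LT w : inX w -> path_length x0 T theta <= LT -> 0 <= LT ->
  C (rhgd W) - C w <= L / alpha * delta * (1 - (L / alpha)^-1) ^+ W * LT.
Proof.
move=> Xw PL LT_ge0.
have r_ge0 : 0 <= (1 - alpha / L) ^+ W.
  by rewrite exprn_ge0 // subr_ge0 ler_pdivrMr ?mul1r ?alpha_le_L.
rewrite invf_div; apply: le_trans (rhgd_gap_le W Xw) _.
apply: le_trans (ler_wpM2l r_ge0 (init_gap_le_path Xw PL)) _.
have -> : L / alpha * delta * (1 - alpha / L) ^+ W * LT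
    = L / alpha * ((1 - alpha / L) ^+ W * (delta * LT)) by ring.
rewrite -[X in X <= _]mul1r ler_wpM2r ?ler_pdivlMr ?mul1r ?alpha_le_L //.
by rewrite mulr_ge0 // mulr_ge0 // delta_ge0.
Qed.

Lemma rhag_regret_le W LT w : inX w -> path_length x0 T theta <= LT -> 0 <= LT ->
  C (rhag_x W) - C w <= 2%:R * delta * (1 - (Num.sqrt (L / alpha))^-1) ^+ W * LT.
Proof.
move=> Xw PL LT_ge0.
have -> : (Num.sqrt (L / alpha))^-1 = rho.
  by rewrite -sqrtrV ?invf_div // divr_ge0 // ltW.
have q_ge0 : 0 <= (1 - rho) ^+ W by rewrite exprn_ge0 // subr_ge0 rho_le1.
have dLT_ge0 : 0 <= delta * LT by rewrite mulr_ge0 // delta_ge0.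
have -> : 2%:R * delta * (1 - rho) ^+ W * LT = 2 * ((1 - rho) ^+ W * (delta * LT)).
  by ring.
apply: le_twice_of_near; first by rewrite mulr_ge0.
move=> s eps s_gt0 s_lt1 eps_gt0.
have eps2_gt0 : 0 < eps / 2 by rewrite divr_gt0 // ltr0n.
have [z Xz z_min] := exists_near_min eps2_gt0.
have := rhag_gap_le_near_min W Xw Xz z_min (ltW s_gt0) (ltW s_lt1).
have ss : 0 <= s * (2 - s) by rewrite mulr_ge0 ?(ltW s_gt0) //; lra.
have := ler_wpM2l ss (ler_wpM2l q_ge0 (init_gap_le_path Xz PL)).
lra.
Qed.

End RecedingHorizon.

Theorem theorem2 (R : realType) (n : nat) (X : set 'rV[R]_n) (D : R)
    (beta : R) (x0 : 'rV[R]_n) (T : nat) (alpha l G LT : R) (W : nat)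
    (proj : 'rV[R]_n -> 'rV[R]_n) :
  X !=set0 -> compact X -> convexS X ->
  (forall x y, X x -> X y -> enorm (x - y) <= D) ->
  0 <= beta -> X x0 -> (1 <= T)%N ->
  0 < alpha -> alpha <= l -> 0 < G ->
  0 <= LT -> LT <= D * T%:R ->
  (forall z, is_proj X z (proj z)) ->
  let L := l + 4%:R * beta in
  let gamma := l^-1 in
  let eta := L^-1 in
  let lam := (1 - Num.sqrt (alpha * eta)) / (1 + Num.sqrt (alpha * eta)) in
  let kappa := Num.sqrt (1 - alpha / l) in
  let delta := (beta / l + 1) * (G / (1 - kappa)) in
  let Qf := (l + 4%:R * beta) / alpha in
  forall (f : nat -> 'rV[R]_n -> R) (theta : nat -> 'rV[R]_n),
    (forall t, (1 <= t <= T)%N -> in_class X alpha l G (f t)) ->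
    (forall t, (1 <= t <= T)%N -> is_argmin X (f t) (theta t)) ->
    path_length x0 T theta <= LT ->
    forall y : nat -> 'rV[R]_n, (forall t, (1 <= t <= T)%N -> X (y t)) ->
      cost f beta x0 T (rhgd_out proj f beta gamma eta x0 T W) - cost f beta x0 T y
        <= Qf * delta * (1 - Qf^-1) ^+ W * LT
      /\
      cost f beta x0 T (rhag_out proj f beta gamma eta lam x0 T W) - cost f beta x0 T y
        <= 2%:R * delta * (1 - (Num.sqrt Qf)^-1) ^+ W * LT.
Proof.
move=> _ _ convX _ beta_ge0 X_x0 T_gt0 alpha_gt0 alpha_le_l G_gt0 LT_ge0 _ projP
  L gamma eta lam kappa delta Qf f theta f_class theta_min PL y Xy.
split.
  exact: (rhgd_regret_le convX beta_ge0 X_x0 T_gt0 alpha_gt0 alpha_le_l projP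
    f_class theta_min G_gt0 W Xy PL LT_ge0).
exact: (rhag_regret_le convX beta_ge0 X_x0 T_gt0 alpha_gt0 alpha_le_l projP
  f_class theta_min G_gt0 W Xy PL LT_ge0).
Qed.
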